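(* Let $t \in T$ with $t \geq 10^6$. If $C_3(t) = 5$, then $P(t) \geq 2$.
   Context: For positive integers $m, r$, $C_m(r)$ is the minimum odd positive integer $n$ such that there exist vectors $v_1, \ldots, v_n \in \mathbb{Z}^m$ (not necessarily distinct) with $|v_i| = \sqrt{r}$ (Euclidean norm) for every $i$ and $v_1 + \cdots + v_n = \mathbf{0}$; if no such odd $n$ exists, $C_m(r) = 0$. $T$ is the set of positive integers $t \equiv 2 \pmod 4$ whose square-free part has at least one odd prime factor $p$ with $p \equiv 2 \pmod 3$. For a positive integer $z$, $P(z)$ is the number of integer triples $(a,b,c)$ with $0 \leq a \leq b \leq c$ and $a^2 + b^2 + c^2 = z$. *)

From mathcomp Require Import all_boot all_order all_algebra.
From mathcomp Require Import ssrint.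
From Stdlib Require Import ClassicalEpsilon.
Set Implicit Arguments. Unset Strict Implicit. Unset Printing Implicit Defensive.
Import GRing.Theory Num.Theory.

Definition balanced (m r n : nat) : Prop :=
  exists v : 'I_n -> 'I_m -> int,
    (forall i, (\sum_(j < m) (v i j) ^+ 2)%R = Posz r) /\
    (forall j, (\sum_(i < n) v i j)%R = 0%R).

Definition odd_balanced (m r n : nat) : bool :=
  odd n && (if excluded_middle_informative (balanced m r n) then true else false).

Definition C (m r : nat) : nat :=
  match excluded_middle_informative (exists n, odd_balanced m r n) with
  | left H => ex_minn H
  | right _ => 0
  end.

Definition sqfree_part (t : nat) : nat :=
  \prod_(p <- primes t | odd (logn p t)) p.

Definition inT (t : nat) : Prop :=
  0 < t /\ t %% 4 = 2 /\
  exists p, [/\ prime p, odd p, p %| sqfree_part t & p %% 3 = 2].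

Definition P (z : nat) : nat :=
  \sum_(a < z.+1) \sum_(b < z.+1) \sum_(c < z.+1)
     ((a <= b) && (b <= c) && (a ^ 2 + b ^ 2 + c ^ 2 == z)).

(* Let v_1, ..., v_5 be vectors of norm t summing to zero. If two of them have different
   sorted absolute values, these are two of the triples counted by P(t). Otherwise all v_i
   are signed permutations of one sorted (a, b, c), and their signed permutation matrices
   add up to an integer matrix M with M (a, b, c) = 0 whose absolute row and column sums
   are at most 5 and whose row and column sums are odd. If M has rank one, its entries are
   +-1 and c = a + b; then (a, -c, b) and its cyclic shifts would make C_3(t) = 3. Otherwise
   (a, b, c) is parallel to a cross product of two rows, a vector with entries at most 50,
   so t >= 10^6 forces gcd(a, b, c) > 1, and t = 2 (mod 4) gives an odd prime p dividing
   a, b and c. Writing p as the norm of a quaternion q (Lagrange), the rotation by q turns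
   (a, b, c) / p into a second representation of t, so P(t) >= 2. *)

From mathcomp Require Import all_boot all_order all_algebra perm.
From mathcomp Require Import zify ring.
From Stdlib Require Import Classical_Prop ClassicalEpsilon.
Import Order.TTheory GRing.Theory Num.Theory.
Set Implicit Arguments. Unset Strict Implicit. Unset Printing Implicit Defensive.

Local Open Scope ring_scope.

Lemma sum_ord3 (R : nmodType) (F : 'I_3 -> R) : \sum_(j < 3) F j = F 0 + F 1 + F 2.
Proof.
by rewrite !big_ord_recl big_ord0 addr0 addrA; congr (F _ + F _ + F _); apply: val_inj.
Qed.

Lemma ord3_cases (j : 'I_3) : [\/ j = 0, j = 1 | j = 2].
Proof.
by case: j => [[|[|[|//]]] h]; [constructor 1|constructor 2|constructor 3]; apply: val_inj.
Qed.

Lemma Posz_absz_sqr (x : int) : (`|x|%N ^ 2)%:Z = x ^+ 2.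
Proof. by rewrite -natz natrX natz abszE -normrX ger0_norm ?sqr_ge0. Qed.

Definition sum4sq (a b c d : int) := a ^+ 2 + b ^+ 2 + c ^+ 2 + d ^+ 2.

Definition is_sum4sq (n : int) := exists a b c d : int, sum4sq a b c d = n.

Lemma euler_four_square (x1 x2 x3 x4 y1 y2 y3 y4 : int) :
  sum4sq x1 x2 x3 x4 * sum4sq y1 y2 y3 y4 =
  sum4sq (x1 * y1 + x2 * y2 + x3 * y3 + x4 * y4) (x1 * y2 - x2 * y1 + x3 * y4 - x4 * y3)
         (x1 * y3 - x3 * y1 + x4 * y2 - x2 * y4) (x1 * y4 - x4 * y1 + x2 * y3 - x3 * y2).
Proof. rewrite /sum4sq; ring. Qed.

Lemma centered_residue (x m : int) (k : nat) : 0 < m -> m <= 2 * k%:Z + 1 ->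
  exists q y : int, x = q * m + y /\ `|y| <= k%:Z.
Proof.
move=> m_gt0 m_le; have m_neq0 : m != 0 by rewrite gt_eqF.
have := divz_eq (x + k%:Z) m; have := modz_ge0 (x + k%:Z) m_neq0.
have := ltz_pmod (x + k%:Z) m_gt0.
exists (divz (x + k%:Z) m), (modz (x + k%:Z) m - k%:Z); split; lia.
Qed.

(* Euler's identity applied to x = q m + y and y, both congruent modulo m, gives a product
   whose four terms are divisible by m: this is the descent step of Lagrange's proof. *)
Lemma sum4sq_descent_step (M P r q1 q2 q3 q4 y1 y2 y3 y4 : int) : M != 0 ->
  sum4sq (q1 * M + y1) (q2 * M + y2) (q3 * M + y3) (q4 * M + y4) = M * P ->
  sum4sq y1 y2 y3 y4 = M * r -> is_sum4sq (r * P).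
Proof.
move=> M_neq0 Ex Ey.
exists (q1 * y1 + q2 * y2 + q3 * y3 + q4 * y4 + r), (q1 * y2 - q2 * y1 + q3 * y4 - q4 * y3),
  (q1 * y3 - q3 * y1 + q4 * y2 - q2 * y4), (q1 * y4 - q4 * y1 + q2 * y3 - q3 * y2).
apply: (mulfI (mulf_neq0 M_neq0 M_neq0)).
have -> : M * M * (r * P) = (M * P) * (M * r) by ring.
have eA : (q1 * y1 + q2 * y2 + q3 * y3 + q4 * y4 + r) * M =
    (q1 * M + y1) * y1 + (q2 * M + y2) * y2 + (q3 * M + y3) * y3 + (q4 * M + y4) * y4.
  by rewrite mulrDl [r * M]mulrC -Ey /sum4sq; ring.
by rewrite -Ex -Ey euler_four_square -eA /sum4sq; ring.
Qed.

Lemma sqr_le_sqr_of_norm (y k : int) : `|y| <= k -> y ^+ 2 <= k ^+ 2.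
Proof. by move=> yk; nia. Qed.

Lemma sqr_eq_sqr_sign (x k : int) : x ^+ 2 = k ^+ 2 -> exists2 s : int, x = s * k & s ^+ 2 = 1.
Proof.
move/eqP; rewrite eqf_sqr => /orP[] /eqP ->; first by exists 1; rewrite ?mul1r ?expr1n.
by exists (-1); rewrite ?mulN1r ?sqrrN ?expr1n.
Qed.

(* In the extreme cases r = 0 and r = m every x_i is congruent to 0, resp. to m/2, modulo m,
   so m divides p. *)
Lemma sum4sq_descent_degenerate (M P r q1 q2 q3 q4 y1 y2 y3 y4 : int) (k : nat) :
  0 < M -> 2 * k%:Z <= M -> `|y1| <= k%:Z -> `|y2| <= k%:Z -> `|y3| <= k%:Z -> `|y4| <= k%:Z ->
  sum4sq (q1 * M + y1) (q2 * M + y2) (q3 * M + y3) (q4 * M + y4) = M * P ->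
  sum4sq y1 y2 y3 y4 = M * r -> r = 0 \/ r = M -> (M %| P)%Z.
Proof.
move=> M_gt0 kM y1k y2k y3k y4k Ex Ey [r0|rM].
  have [y1E y2E y3E y4E] : [/\ y1 = 0, y2 = 0, y3 = 0 & y4 = 0].
    move/eqP: Ey; rewrite r0 mulr0 !paddr_eq0 ?addr_ge0 ?sqr_ge0 // !sqrf_eq0.
    by move=> /andP[/andP[/andP[]]] /eqP-> /eqP-> /eqP-> /eqP->.
  apply/dvdzP; exists (q1 ^+ 2 + q2 ^+ 2 + q3 ^+ 2 + q4 ^+ 2).
  apply: (mulfI (lt0r_neq0 M_gt0)); rewrite -Ex y1E y2E y3E y4E /sum4sq; ring.
have := sqr_le_sqr_of_norm y1k; have := sqr_le_sqr_of_norm y2k.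
have := sqr_le_sqr_of_norm y3k; have := sqr_le_sqr_of_norm y4k.
move: Ey; rewrite rM /sum4sq => Ey y4k2 y3k2 y2k2 y1k2.
have Mk : M = 2 * k%:Z.
  have : M * M <= 4 * k%:Z ^+ 2 by lia.
  by nia.
have [[s1 y1E s1E] [s2 y2E s2E] [s3 y3E s3E] [s4 y4E s4E]] :
    [/\ exists2 s, y1 = s * k%:Z & s ^+ 2 = 1, exists2 s, y2 = s * k%:Z & s ^+ 2 = 1,
        exists2 s, y3 = s * k%:Z & s ^+ 2 = 1 & exists2 s, y4 = s * k%:Z & s ^+ 2 = 1].
  by split; apply: sqr_eq_sqr_sign; move: Ey; rewrite Mk; lia.
apply/dvdzP.
exists (q1 ^+ 2 + q2 ^+ 2 + q3 ^+ 2 + q4 ^+ 2 + q1 * s1 + q2 * s2 + q3 * s3 + q4 * s4 + 1).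
apply: (mulfI (lt0r_neq0 M_gt0)); rewrite -Ex Mk y1E y2E y3E y4E /sum4sq.
have sqE (q s : int) : s ^+ 2 = 1 ->
    (q * (2 * k%:Z) + s * k%:Z) ^+ 2 = k%:Z ^+ 2 * (4 * (q ^+ 2 + q * s) + 1).
  by move=> sE; rewrite -[X in _ * (_ + X)]sE; ring.
rewrite !sqE //; ring.
Qed.

Lemma sum4sq_descent (p : nat) : prime p ->
  forall m : nat, (0 < m < p)%N -> is_sum4sq (m * p)%N%:Z -> is_sum4sq p%:Z.
Proof.
move=> p_prime m; elim/ltn_ind: m => m IH /andP[m_gt0 m_lt_p] [x1 [x2 [x3 [x4 Ex]]]].
have [m1|m_neq1] := eqVneq m 1%N; first by exists x1, x2, x3, x4; rewrite Ex m1 mul1n.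
set k := m./2.
have [k_lo k_hi] : 2 * k%:Z <= m%:Z /\ m%:Z <= 2 * k%:Z + 1.
  by have := odd_double_half m; rewrite -/k; case: (odd m) => /=; lia.
have mZ_gt0 : 0 < m%:Z by rewrite ltz_nat.
have [q1 [y1 [x1E y1k]]] := centered_residue x1 mZ_gt0 k_hi.
have [q2 [y2 [x2E y2k]]] := centered_residue x2 mZ_gt0 k_hi.
have [q3 [y3 [x3E y3k]]] := centered_residue x3 mZ_gt0 k_hi.
have [q4 [y4 [x4E y4k]]] := centered_residue x4 mZ_gt0 k_hi.
rewrite x1E x2E x3E x4E PoszM in Ex.
pose Q := (q1 ^+ 2 + q2 ^+ 2 + q3 ^+ 2 + q4 ^+ 2) * m%:Z
  + 2 * (q1 * y1 + q2 * y2 + q3 * y3 + q4 * y4).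
have Ey : sum4sq y1 y2 y3 y4 = m%:Z * (p%:Z - Q).
  by rewrite mulrBr -Ex /Q /sum4sq; ring.
set r := p%:Z - Q in Ey.
have r_ge0 : 0 <= r.
  by rewrite -(pmulr_rge0 _ mZ_gt0) -Ey /sum4sq !addr_ge0 ?sqr_ge0.
have r_le_m : r <= m%:Z.
  rewrite -(ler_pM2l mZ_gt0) -Ey.
  have k_sqr : 4 * k%:Z ^+ 2 <= m%:Z * m%:Z by clear -k_lo; nia.
  have := sqr_le_sqr_of_norm y1k; have := sqr_le_sqr_of_norm y2k.
  have := sqr_le_sqr_of_norm y3k; have := sqr_le_sqr_of_norm y4k.
  by rewrite /sum4sq; clear -k_sqr; lia.
have [r_deg|r_lt_m] : (r = 0 \/ r = m%:Z) \/ (0 < r < m%:Z) by clear -r_ge0 r_le_m; lia.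
  have := sum4sq_descent_degenerate mZ_gt0 k_lo y1k y2k y3k y4k Ex Ey r_deg.
  rewrite dvdzE /= => /(prime_nt_dvdP p_prime m_neq1) m_eq_p.
  by move: m_lt_p; rewrite m_eq_p ltnn.
have rE : r = `|r|%N%:Z by rewrite gez0_abs.
apply: (IH `|r|%N); first by clear -r_lt_m rE; lia.
  by apply/andP; split; clear -r_lt_m rE m_lt_p; lia.
rewrite PoszM -rE.
exact: sum4sq_descent_step (lt0r_neq0 mZ_gt0) Ex Ey.
Qed.

Local Close Scope ring_scope.

Lemma sqr_mod_half_inj (p x y : nat) : odd p -> prime p -> x <= p./2 -> y <= p./2 ->
  x ^ 2 = y ^ 2 %[mod p] -> x = y.
Proof.
wlog yx : x y / y <= x.
  by move=> H po pp xh yh e; case: (leqP y x) => [|/ltnW] yx; [|apply/esym]; apply: H.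
move=> po pp xh yh e.
have p_half : p = (p./2).*2.+1 by rewrite -[LHS]odd_double_half po.
have : p %| (x - y) * (x + y) by rewrite -subn_sqr -eqn_mod_dvd ?leq_exp2r // e.
by rewrite Euclid_dvdM // => /orP[] /dvdnP[[|q] qE]; rewrite ?mulSn in qE; lia.
Qed.

Lemma exists_sum2sq_add1_dvd (p : nat) : odd p -> prime p ->
  exists x y : nat, [/\ x <= p./2, y <= p./2 & p %| x ^ 2 + y ^ 2 + 1].
Proof.
move=> po pp; set h := p./2.
have p_half : p = h.*2.+1 by rewrite -[LHS]odd_double_half po.
have p_gt0 : 0 < p by rewrite p_half.
have lt_p : forall y, p.-1 - y ^ 2 %% p < p by lia.
pose f (x : 'I_h.+1) : 'I_p := Ordinal (ltn_pmod (x ^ 2) p_gt0).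
pose g (y : 'I_h.+1) : 'I_p := Ordinal (lt_p y).
have f_inj : injective f.
  move=> x x' /(congr1 val) /= e; apply: val_inj.
  by apply: (sqr_mod_half_inj po pp) => //; rewrite -ltnS ltn_ord.
have g_inj : injective g.
  move=> y y' /(congr1 val) /= e; apply: val_inj.
  apply: (sqr_mod_half_inj po pp); [by rewrite -ltnS ltn_ord|by rewrite -ltnS ltn_ord|].
  by have := ltn_pmod (y ^ 2) p_gt0; have := ltn_pmod (y' ^ 2) p_gt0; lia.
have : [set f x | x in 'I_h.+1] :&: [set g y | y in 'I_h.+1] != set0.
  apply/negP => /eqP disj.
  have := max_card (mem ([set f x | x in 'I_h.+1] :|: [set g y | y in 'I_h.+1])).
  by rewrite card_ord cardsU disj cards0 !card_imset // card_ord; lia.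
case/set0Pn => z; rewrite inE => /andP[/imsetP[x _ ->] /imsetP[y _ /(congr1 val) /= e]].
exists x, y; split; [by rewrite -ltnS ltn_ord|by rewrite -ltnS ltn_ord|].
apply/dvdnP; exists (x ^ 2 %/ p + y ^ 2 %/ p + 1).
rewrite {1}(divn_eq (x ^ 2) p) {1}(divn_eq (y ^ 2) p).
move: (x ^ 2 %/ p) (y ^ 2 %/ p) (x ^ 2 %% p) (y ^ 2 %% p) e (ltn_pmod (y ^ 2) p_gt0).
by clear; lia.
Qed.

Local Open Scope ring_scope.

Lemma prime_sum4sq (p : nat) : prime p -> is_sum4sq p%:Z.
Proof.
move=> pp; have [->|po] := even_prime pp; first by exists 1, 1, 0, 0.
have [x [y [xh yh /dvdnP[m mE]]]] := exists_sum2sq_add1_dvd po pp.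
have p_half : p = (p./2).*2.+1 by rewrite -[LHS]odd_double_half po.
move: (p./2) xh yh p_half => h xh yh p_half.
apply: (sum4sq_descent pp (m := m)).
  have mp_gt0 : (0 < m * p)%N by rewrite -mE addn1.
  have mp_le : (m * p <= h ^ 2 + h ^ 2 + 1)%N by rewrite -mE !leq_add2r leq_add // leq_exp2r.
  apply/andP; split; first by move: mp_gt0; rewrite muln_gt0 => /andP[].
  have h_gt0 : (0 < h)%N by move: (prime_gt1 pp); rewrite p_half ltnS double_gt0.
  move: mp_le; rewrite p_half => mp_le.
  by rewrite ltnNge; apply/negP => /leq_mul /(_ (leqnn h.*2.+1)); clear -mp_le h_gt0; nia.
exists x%:Z, y%:Z, 1, 0; rewrite -mE /sum4sq !PoszD -!natz !natrX; ring.
Qed.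

(* The coordinates of q h q^* for the quaternion q = a + b i + c j + d k and the
   pure quaternion h = h1 i + h2 j + h3 k. *)
Definition qrot1 (a b c d h1 h2 h3 : int) :=
  (a ^+ 2 + b ^+ 2 - c ^+ 2 - d ^+ 2) * h1 + 2 * (b * c - a * d) * h2 + 2 * (b * d + a * c) * h3.
Definition qrot2 (a b c d h1 h2 h3 : int) :=
  2 * (b * c + a * d) * h1 + (a ^+ 2 - b ^+ 2 + c ^+ 2 - d ^+ 2) * h2 + 2 * (c * d - a * b) * h3.
Definition qrot3 (a b c d h1 h2 h3 : int) :=
  2 * (b * d - a * c) * h1 + 2 * (c * d + a * b) * h2 + (a ^+ 2 - b ^+ 2 - c ^+ 2 + d ^+ 2) * h3.

Lemma qrot_norm (a b c d h1 h2 h3 : int) :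
  qrot1 a b c d h1 h2 h3 ^+ 2 + qrot2 a b c d h1 h2 h3 ^+ 2 + qrot3 a b c d h1 h2 h3 ^+ 2 =
  sum4sq a b c d ^+ 2 * (h1 ^+ 2 + h2 ^+ 2 + h3 ^+ 2).
Proof. rewrite /qrot1 /qrot2 /qrot3 /sum4sq; ring. Qed.

Lemma prime_dvdz_sqr_le (p : nat) (x : int) : prime p ->
  (p%:Z %| x ^+ 2)%Z -> x ^+ 2 <= p%:Z -> x = 0.
Proof.
move=> pp; rewrite dvdzE abszX Euclid_dvdX // andbT => /dvdnP[k xE] x_le.
apply/normr0_eq0; rewrite -abszE xE.
have p_gt1 := prime_gt1 pp.
have : (`|x|%N ^ 2 <= p)%N by rewrite -lez_nat Posz_absz_sqr.
by rewrite xE; case: k {xE} => // k; rewrite mulSn; nia.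
Qed.

Lemma odd_prime_dvdz_2mul (p : nat) (u x : int) : prime p -> odd p ->
  ~~ (p%:Z %| u)%Z -> (p%:Z %| 2 * u * x)%Z -> (p%:Z %| x)%Z.
Proof.
move=> pp po; rewrite !dvdzE !abszM /= => pu.
rewrite !Euclid_dvdM // (negbTE pu) orbF => /orP[p2|//].
have p_le2 : (p <= 2)%N by apply: dvdn_leq p2.
have p_gt1 := prime_gt1 pp.
by move: po; have -> : p = 2%N by lia.
Qed.

(* The three differences sum to 4 a^2 - p, and any two of them sum to 2 a^2 - 2 x^2 for
   x = b, c or d; so p would divide all four squares, each of which is at most p. *)
Lemma odd_prime_sum4sq_not_dvd_sqr_diffs (p : nat) (a b c d : int) : prime p -> odd p ->
  sum4sq a b c d = p%:Z ->
  ~ [/\ (p%:Z %| a ^+ 2 + b ^+ 2 - c ^+ 2 - d ^+ 2)%Z, (p%:Z %| a ^+ 2 - b ^+ 2 + c ^+ 2 - d ^+ 2)%Z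
       & (p%:Z %| a ^+ 2 - b ^+ 2 - c ^+ 2 + d ^+ 2)%Z].
Proof.
move=> pp po pE.
set E1 := a ^+ 2 + b ^+ 2 - c ^+ 2 - d ^+ 2; set E2 := a ^+ 2 - b ^+ 2 + c ^+ 2 - d ^+ 2.
set E3 := a ^+ 2 - b ^+ 2 - c ^+ 2 + d ^+ 2; move=> [e1 e2 e3].
have dvdD x y : (p%:Z %| x)%Z -> (p%:Z %| y)%Z -> (p%:Z %| x + y)%Z by move=> px py; rewrite rpredD.
have dvdB x y : (p%:Z %| x)%Z -> (p%:Z %| y)%Z -> (p%:Z %| x - y)%Z by move=> px py; rewrite rpredB.
have dvd_p := odd_prime_dvdz_2mul pp po.
have p_ndvd2 : ~~ (p%:Z %| 2)%Z.
  by rewrite dvdzE /= dvdn_prime2 //; apply: contraTN po => /eqP ->.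
have p_ndvd1 : ~~ (p%:Z %| 1)%Z by rewrite dvdzE /= dvdn1 neq_ltn prime_gt1 ?orbT.
have pa : (p%:Z %| a ^+ 2)%Z.
  apply: (dvd_p 2) => //; rewrite (_ : 2 * 2 * _ = E1 + E2 + E3 + p%:Z).
    exact: dvdD _ _ (dvdD _ _ (dvdD _ _ e1 e2) e3) (dvdzz _).
  by rewrite -pE /sum4sq /E1 /E2 /E3; ring.
have p2a : (p%:Z %| 2 * a ^+ 2)%Z by rewrite dvdz_mull.
have pb : (p%:Z %| b ^+ 2)%Z.
  apply: (dvd_p 1) => //; rewrite (_ : 2 * 1 * _ = 2 * a ^+ 2 - (E2 + E3)).
    exact: dvdB _ _ p2a (dvdD _ _ e2 e3).
  by rewrite /E2 /E3; ring.
have pc : (p%:Z %| c ^+ 2)%Z.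
  apply: (dvd_p 1) => //; rewrite (_ : 2 * 1 * _ = 2 * a ^+ 2 - (E1 + E3)).
    exact: dvdB _ _ p2a (dvdD _ _ e1 e3).
  by rewrite /E1 /E3; ring.
have pd : (p%:Z %| d ^+ 2)%Z.
  apply: (dvd_p 1) => //; rewrite (_ : 2 * 1 * _ = 2 * a ^+ 2 - (E1 + E2)).
    exact: dvdB _ _ p2a (dvdD _ _ e1 e2).
  by rewrite /E1 /E2; ring.
have [ga gb gc gd] := And4 (sqr_ge0 a) (sqr_ge0 b) (sqr_ge0 c) (sqr_ge0 d).
have a0 : a = 0 by apply: prime_dvdz_sqr_le pp pa _; rewrite -pE /sum4sq; clear -gb gc gd; lia.
have b0 : b = 0 by apply: prime_dvdz_sqr_le pp pb _; rewrite -pE /sum4sq; clear -ga gc gd; lia.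
have c0 : c = 0 by apply: prime_dvdz_sqr_le pp pc _; rewrite -pE /sum4sq; clear -ga gb gd; lia.
have d0 : d = 0 by apply: prime_dvdz_sqr_le pp pd _; rewrite -pE /sum4sq; clear -ga gb gc; lia.
by move: (prime_gt0 pp); rewrite -ltz_nat -pE a0 b0 c0 d0.
Qed.

(* Write p = a^2 + b^2 + c^2 + d^2. If every rotation by q = a + b i + c j + d k of every
   integer vector of norm u^2 + v^2 + s^2 were divisible by p, then p would divide
   2 u (a^2 + b^2 - c^2 - d^2) and its two analogues. *)
Lemma qrot_not_all_dvdz (p : nat) (u v s : int) : prime p -> odd p ->
  ~~ [&& (p%:Z %| u)%Z, (p%:Z %| v)%Z & (p%:Z %| s)%Z] ->
  exists w1 w2 w3 : int, w1 ^+ 2 + w2 ^+ 2 + w3 ^+ 2 = p%:Z ^+ 2 * (u ^+ 2 + v ^+ 2 + s ^+ 2) /\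
    ~~ [&& (p%:Z %| w1)%Z, (p%:Z %| w2)%Z & (p%:Z %| w3)%Z].
Proof.
wlog pu : u v s / ~~ (p%:Z %| u)%Z.
  move=> H pp po nd; move: (nd); rewrite !negb_and => /or3P[pu|pv|ps]; first exact: H.
    rewrite (_ : u ^+ 2 + _ + _ = v ^+ 2 + u ^+ 2 + s ^+ 2); last by ring.
    by apply: H => //; rewrite (negbTE pv).
  rewrite (_ : u ^+ 2 + _ + _ = s ^+ 2 + v ^+ 2 + u ^+ 2); last by ring.
  by apply: H => //; rewrite (negbTE ps).
move=> pp po _; have [a [b [c [d pE]]]] := prime_sum4sq pp.
apply: NNPP => none; apply: (odd_prime_sum4sq_not_dvd_sqr_diffs pp po pE).
have all_dvd h1 h2 h3 : h1 ^+ 2 + h2 ^+ 2 + h3 ^+ 2 = u ^+ 2 + v ^+ 2 + s ^+ 2 ->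
    [&& (p%:Z %| qrot1 a b c d h1 h2 h3)%Z, (p%:Z %| qrot2 a b c d h1 h2 h3)%Z
      & (p%:Z %| qrot3 a b c d h1 h2 h3)%Z].
  move=> hE; apply/negPn/negP => nd; apply: none.
  exists (qrot1 a b c d h1 h2 h3), (qrot2 a b c d h1 h2 h3), (qrot3 a b c d h1 h2 h3).
  by rewrite qrot_norm pE hE.
have /and3P[d1 _ _] := all_dvd u v s erefl.
have /and3P[d1' _ _] := all_dvd u (- v) (- s) ltac:(by rewrite !sqrrN).
have /and3P[_ d2 _] := all_dvd v u s ltac:(by ring).
have /and3P[_ d2' _] := all_dvd (- v) u (- s) ltac:(by rewrite !sqrrN; ring).
have /and3P[_ _ d3] := all_dvd v s u ltac:(by ring).
have /and3P[_ _ d3'] := all_dvd (- v) (- s) u ltac:(by rewrite !sqrrN; ring).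
have dvd_p := odd_prime_dvdz_2mul pp po pu.
split; apply: dvd_p.
- rewrite (_ : 2 * u * _ = qrot1 a b c d u v s + qrot1 a b c d u (- v) (- s)).
    by rewrite rpredD.
  by rewrite /qrot1; ring.
- rewrite (_ : 2 * u * _ = qrot2 a b c d v u s + qrot2 a b c d (- v) u (- s)).
    by rewrite rpredD.
  by rewrite /qrot2; ring.
- rewrite (_ : 2 * u * _ = qrot3 a b c d v s u + qrot3 a b c d (- v) (- s) u).
    by rewrite rpredD.
  by rewrite /qrot3; ring.
Qed.

Local Close Scope ring_scope.

Lemma add_leq_sum (I : finType) (F : I -> nat) i j : i != j -> F i + F j <= \sum_k F k.
Proof.
move=> ij; rewrite (bigD1 i) //= leq_add2l (bigD1 j) 1?eq_sym //=.
exact: leq_addr.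
Qed.

Lemma two_le_P_sorted (t a b c a' b' c' : nat) : a <= b <= c -> a' <= b' <= c' ->
  a ^ 2 + b ^ 2 + c ^ 2 = t -> a' ^ 2 + b' ^ 2 + c' ^ 2 = t -> [:: a; b; c] != [:: a'; b'; c'] ->
  2 <= P t.
Proof.
have lt_t x y z : x ^ 2 + y ^ 2 + z ^ 2 = t -> [/\ x < t.+1, y < t.+1 & z < t.+1].
  by move=> xyzE; rewrite ltnS -xyzE; split; nia.
move=> abc abc' E E' neq.
have [a_lt b_lt c_lt] := lt_t _ _ _ E; have [a_lt' b_lt' c_lt'] := lt_t _ _ _ E'.
pose F (x : 'I_t.+1 * ('I_t.+1 * 'I_t.+1)) : nat :=
  (x.1 <= x.2.1) && (x.2.1 <= x.2.2) && (x.1 ^ 2 + x.2.1 ^ 2 + x.2.2 ^ 2 == t).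
have -> : P t = \sum_x F x.
  by rewrite /P (eq_bigr _ (fun a _ => pair_bigA _ _)) pair_bigA.
pose x := (Ordinal a_lt, (Ordinal b_lt, Ordinal c_lt)).
pose x' := (Ordinal a_lt', (Ordinal b_lt', Ordinal c_lt')).
have x_neq : x != x'.
  by apply: contraNneq neq => -[-> -> ->].
by apply: leq_trans (add_leq_sum F x_neq); rewrite /F /= abc abc' E E' !eqxx.
Qed.

Definition abs_profile n (w : 'I_n -> int) : seq nat := sort leq [tuple `|w j|%N | j < n].

Lemma sorted_abs_profile n (w : 'I_n -> int) : sorted leq (abs_profile w).
Proof. exact: (sort_sorted leq_total). Qed.

Lemma size_abs_profile n (w : 'I_n -> int) : size (abs_profile w) = n.
Proof. by rewrite size_sort size_tuple. Qed.

Lemma abs_profile_perm n (w : 'I_n -> int) :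
  exists s : 'S_n, forall j, `|w j|%N = nth 0 (abs_profile w) (s j).
Proof.
have /tuple_permP[s sE] : perm_eq (abs_profile w) [tuple `|w j|%N | j < n].
  by rewrite perm_sort.
by exists s^-1%g => j; rewrite sE nth_mktuple permKV tnth_mktuple.
Qed.

Lemma abs_profile_all (a : pred nat) n (w : 'I_n -> int) :
  all a (abs_profile w) -> forall j, a `|w j|%N.
Proof.
move=> /(all_nthP 0) aw j; have [s sE] := abs_profile_perm w.
by rewrite sE; apply: aw; rewrite size_abs_profile ltn_ord.
Qed.

Local Open Scope ring_scope.

Lemma abs_profile_sqr_sum n (w : 'I_n -> int) :
  \sum_j w j ^+ 2 = (\sum_(i < n) nth 0 (abs_profile w) i ^ 2)%N%:Z.
Proof.
have [s sE] := abs_profile_perm w.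
rewrite -natz natr_sum [RHS](reindex_inj (@perm_inj _ s)); apply: eq_bigr => j _.
by rewrite natz -sE Posz_absz_sqr.
Qed.

Lemma abs_profile_ord3 (w : 'I_3 -> int) : exists a b c : nat,
  [/\ abs_profile w = [:: a; b; c], (a <= b <= c)%N
    & \sum_j w j ^+ 2 = (a ^ 2 + b ^ 2 + c ^ 2)%N%:Z].
Proof.
have := size_abs_profile w; have := sorted_abs_profile w; have := abs_profile_sqr_sum w.
case: (abs_profile w) => [|a [|b [|c []]]] // sumE /= /andP[ab /andP[bc _]] _.
exists a, b, c; split; rewrite ?ab ?bc //.
by rewrite sumE !big_ord_recl big_ord0 /= addn0 addnA.
Qed.

Lemma two_le_P (t : nat) (w w' : 'I_3 -> int) : \sum_j w j ^+ 2 = t%:Z -> \sum_j w' j ^+ 2 = t%:Z ->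
  abs_profile w != abs_profile w' -> (2 <= P t)%N.
Proof.
have [a [b [c [-> abc ->]]]] := abs_profile_ord3 w.
have [a' [b' [c' [-> abc' ->]]]] := abs_profile_ord3 w'.
by move=> [tE] [tE']; apply: two_le_P_sorted abc abc' tE tE'.
Qed.

(* With p^e the exact power of p dividing (a, b, c), rotating (a, b, c) / p^e by a
   quaternion of norm p and rescaling gives a representation of t that p^e does not
   divide. *)
Lemma two_le_P_of_prime_dvd (t a b c p : nat) : prime p -> odd p -> (0 < c)%N ->
  (a <= b <= c)%N -> (a ^ 2 + b ^ 2 + c ^ 2)%N = t -> (p %| a)%N -> (p %| b)%N -> (p %| c)%N ->
  (2 <= P t)%N.
Proof.
move=> pp po c_gt0 abc tE pa pb pc.
pose g := gcdn a (gcdn b c); pose e := logn p g; pose q := (p ^ e)%N.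
have g_gt0 : (0 < g)%N by rewrite !gcdn_gt0 c_gt0 !orbT.
have e_gt0 : (0 < e)%N by rewrite logn_gt0 mem_primes pp g_gt0 !dvdn_gcd pa pb pc.
have q_gt0 : (0 < q)%N by rewrite expn_gt0 prime_gt0.
have qE : q = (p ^ e.-1 * p)%N by rewrite -expnSr prednK.
have /and3P[qa qb qc] : [&& q %| a, q %| b & q %| c]%N by rewrite -!dvdn_gcd pfactor_dvdnn.
have z_ndvd : ~~ [&& p %| a %/ q, p %| b %/ q & p %| c %/ q]%N.
  rewrite !dvdn_divRL // -!dvdn_gcd -expnS pfactor_dvdn //.
  by rewrite ltnn.
have [w1 [w2 [w3 [wE w_ndvd]]]] := qrot_not_all_dvdz
  (u := (a %/ q)%N%:Z) (v := (b %/ q)%N%:Z) (s := (c %/ q)%N%:Z) pp po ltac:(by rewrite !dvdzE).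
pose W (j : 'I_3) := (p ^ e.-1)%N%:Z * nth 0 [:: w1; w2; w3] j.
have WE : \sum_j W j ^+ 2 = t%:Z.
  rewrite sum_ord3 /W /= !exprMn -!mulrDr wE mulrA -exprMn -PoszM -qE -tE.
  rewrite -[in RHS](divnK qa) -[in RHS](divnK qb) -[in RHS](divnK qc).
  by rewrite !PoszD -!natz !natrX !natrM; ring.
have [a' [b' [c' [WP abc' WsE]]]] := abs_profile_ord3 W.
apply: (two_le_P_sorted abc abc' tE); first by move: WsE; rewrite WE => -[].
apply: contraNneq w_ndvd => abcE.
have qW := abs_profile_all (a := dvdn q) (w := W); rewrite WP -abcE /= qa qb qc in qW.
have pw (j : 'I_3) : (p%:Z %| nth 0 [:: w1; w2; w3] j)%Z.
  by move: (qW isT j); rewrite /W abszM qE dvdn_pmul2l ?expn_gt0 ?prime_gt0 // dvdzE.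
by rewrite (pw 0) (pw 1) (pw 2).
Qed.

Lemma sum_signs_parity (m : nat) (eps : 'I_m -> int) :
  (forall i, eps i = 1 \/ eps i = -1) -> exists k, \sum_i eps i = 2 * k + (odd m)%:R.
Proof.
elim: m eps => [|m IH] eps eps_sign; first by exists 0; rewrite big_ord0.
rewrite big_ord_recr /=.
have [k ->] := IH (fun i => eps (widen_ord (leqnSn m) i)) (fun i => eps_sign _).
case: (eps_sign ord_max) => ->; case: (odd m) => /=.
- by exists (k + 1); ring.
- by exists k; ring.
- by exists k; ring.
- by exists (k - 1); ring.
Qed.

Lemma sum_signs_neq0 (m : nat) (eps : 'I_m -> int) : odd m ->
  (forall i, eps i = 1 \/ eps i = -1) -> \sum_i eps i != 0.
Proof. by move=> m_odd /sum_signs_parity[k ->]; rewrite m_odd; apply/negP => /eqP; lia. Qed.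

Lemma sum_indicator (n : nat) (a : 'I_n) (x : 'I_n -> int) : \sum_k (a == k)%:R * x k = x a.
Proof.
rewrite (bigD1 a) //= eqxx mul1r big1 ?addr0 // => k /negbTE.
by rewrite eq_sym => ->; rewrite mul0r.
Qed.

Lemma sum_indicator_perm (n : nat) (s : 'S_n) (k : 'I_n) (y : 'I_n -> int) :
  \sum_j y j * (s j == k)%:R = y (s^-1%g k).
Proof.
rewrite -(sum_indicator (s^-1%g k) y); apply: eq_bigr => j _.
by rewrite mulrC -{1}(permKV s k) (inj_eq (@perm_inj _ s)) eq_sym.
Qed.

Section SignedPermutationSum.

Variables (m n : nat) (s : 'I_m -> 'S_n) (eps : 'I_m -> 'I_n -> int).
Hypothesis eps_sign : forall i j, eps i j = 1 \/ eps i j = -1.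

Definition signed_perm_sum (j k : 'I_n) : int := \sum_i eps i j * (s i j == k)%:R.

Lemma signed_perm_sum_mulr (x : 'I_n -> int) j :
  \sum_k signed_perm_sum j k * x k = \sum_i eps i j * x (s i j).
Proof.
under eq_bigr do rewrite /signed_perm_sum mulr_suml.
by rewrite exchange_big; apply: eq_bigr => i _; rewrite -(sum_indicator _ x) mulr_sumr;
  apply: eq_bigr => k _; rewrite mulrA.
Qed.

Lemma signed_perm_sum_row j : \sum_k signed_perm_sum j k = \sum_i eps i j.
Proof.
rewrite -[RHS](eq_bigr _ (fun i _ => mulr1 _)) -(signed_perm_sum_mulr (fun => 1)).
by apply: eq_bigr => k _; rewrite mulr1.
Qed.

Lemma signed_perm_sum_col k : \sum_j signed_perm_sum j k = \sum_i eps i ((s i)^-1%g k).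
Proof.
rewrite exchange_big; apply: eq_bigr => i _.
exact: sum_indicator_perm (fun j => eps i j).
Qed.

Lemma norm_sign i j : `|eps i j| = 1.
Proof. by case: (eps_sign i j) => ->; rewrite ?normrN normr1. Qed.

Lemma signed_perm_sum_row_norm j : \sum_k `|signed_perm_sum j k| <= m%:R.
Proof.
apply: (le_trans (ler_sum _ (fun k _ => ler_norm_sum _ _ _))).
rewrite exchange_big /= (eq_bigr (fun _ => 1)); first by rewrite sumr_const card_ord.
move=> i _; under eq_bigr do rewrite normrM norm_sign mul1r ger0_norm ?ler0n //.
by rewrite -[RHS](sum_indicator (s i j) (fun => 1)); apply: eq_bigr => k _; rewrite mulr1.
Qed.

Lemma signed_perm_sum_col_norm k : \sum_j `|signed_perm_sum j k| <= m%:R.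
Proof.
apply: (le_trans (ler_sum _ (fun j _ => ler_norm_sum _ _ _))).
rewrite exchange_big /= (eq_bigr (fun _ => 1)); first by rewrite sumr_const card_ord.
move=> i _; under eq_bigr do rewrite normrM norm_sign mul1r ger0_norm ?ler0n //.
by rewrite -[RHS](sum_indicator_perm (s i) k (fun => 1)); apply: eq_bigr => j _; rewrite mul1r.
Qed.

End SignedPermutationSum.

Definition vec3 (a b c : int) : 'I_3 -> int := fun j => nth 0 [:: a; b; c] j.

Definition cross (u w : 'I_3 -> int) : 'I_3 -> int :=
  vec3 (u 1 * w 2 - u 2 * w 1) (u 2 * w 0 - u 0 * w 2) (u 0 * w 1 - u 1 * w 0).

Lemma cross_cross (x u w : 'I_3 -> int) j :
  cross x (cross u w) j = u j * \sum_k w k * x k - w j * \sum_k u k * x k.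
Proof.
by rewrite !sum_ord3; case: (ord3_cases j) => ->; rewrite /cross /vec3 /=; ring.
Qed.

Lemma cross_eq0 (u w : 'I_3 -> int) :
  (forall j, cross u w j = 0) -> forall j l, u j * w l = u l * w j.
Proof.
move=> uw; have := uw 0; have := uw 1; have := uw 2; rewrite /cross /vec3 /= => e2 e1 e0.
by move=> j l; case: (ord3_cases j) => ->; case: (ord3_cases l) => ->; lia.
Qed.

Lemma norm_cross_le (u w : 'I_3 -> int) (B : int) :
  (forall j, `|u j| <= B) -> (forall j, `|w j| <= B) -> forall j, `|cross u w j| <= 2 * B ^+ 2.
Proof.
have minor_le x y z v : `|x| <= B -> `|y| <= B -> `|z| <= B -> `|v| <= B ->
    `|x * y - z * v| <= 2 * B ^+ 2.
  move=> xB yB zB vB; apply: le_trans (ler_normB _ _) _; rewrite !normrM.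
  have := normr_ge0 x; have := normr_ge0 y; have := normr_ge0 z; have := normr_ge0 v.
  by move: `|x| `|y| `|z| `|v| xB yB zB vB => X Y Z V; nia.
by move=> uB wB j; case: (ord3_cases j) => ->; rewrite /cross /vec3 /=; apply: minor_le.
Qed.

Lemma exists_neq0_of_sum (I : finType) (F : I -> int) : \sum_i F i != 0 -> exists i, F i != 0.
Proof.
move=> F_neq0; apply/existsP; apply: contraNT F_neq0 => /existsPn F0.
by rewrite big1 // => i _; apply/eqP/negPn/F0.
Qed.

Section RankOne.

Variable M : 'I_3 -> 'I_3 -> int.
Hypothesis minors0 : forall i k j l, M i j * M k l = M i l * M k j.
Hypothesis row_norm : forall i, \sum_j `|M i j| <= 5.
Hypothesis col_norm : forall j, \sum_i `|M i j| <= 5.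
Hypothesis row_neq0 : forall i, \sum_j M i j != 0.
Hypothesis col_neq0 : forall j, \sum_i M i j != 0.

Lemma rank1_entry_neq0 i j : M i j != 0.
Proof.
have [l Mil] := exists_neq0_of_sum (row_neq0 i).
have [k Mkj] := exists_neq0_of_sum (col_neq0 j).
by apply: contraNneq (mulf_neq0 Mil Mkj) => Mij0; rewrite -minors0 Mij0 mul0r.
Qed.

Lemma rank1_entry_norm1 i j : `|M i j| = 1.
Proof.
have ge1 i' j' : 1 <= `|M i' j'| by have := rank1_entry_neq0 i' j'; rewrite -normr_gt0; lia.
apply/eqP; rewrite eq_le ge1 andbT leNgt; apply/negP => Mij_gt1.
have /existsP[k /eqP Mkj1] : [exists k, `|M k j| == 1].
  apply: contraT => /existsPn Mj_gt1; have := col_norm j.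
  suff : \sum_(k < 3) (2 : int) <= \sum_k `|M k j| by rewrite sumr_const card_ord; lia.
  by apply: ler_sum => k _; have := ge1 k j; have := Mj_gt1 k; lia.
have := row_norm i.
suff : \sum_(l < 3) (2 : int) <= \sum_l `|M i l| by rewrite sumr_const card_ord; lia.
apply: ler_sum => l _.
have := congr1 Num.norm (minors0 i k j l); rewrite !normrM Mkj1 mulr1 => <-.
by move: (ge1 k l) Mij_gt1; move: `|M i j| `|M k l| => X Y; nia.
Qed.

End RankOne.

Lemma signed_sum3_sorted (e0 e1 e2 a b c : int) : `|e0| = 1 -> `|e1| = 1 -> `|e2| = 1 ->
  e0 * a + e1 * b + e2 * c = 0 -> 0 <= a -> a <= b -> b <= c -> 0 < c -> c = a + b.
Proof.
have sign (e : int) : `|e| = 1 -> e = 1 \/ e = -1 by lia.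
by move=> /sign[]-> /sign[]-> /sign[]->; lia.
Qed.

(* 50 = 2 * 5^2 bounds the cross product of two rows of a matrix with entries at most 5. *)
Definition small_parallel (x : 'I_3 -> int) := exists d : 'I_3 -> int,
  [/\ exists j, d j != 0, forall j, `|d j| <= 50 & forall j, cross x d j = 0].

(* Either the rows of M are pairwise proportional, and then all entries of M are +-1, or x
   is orthogonal to two independent rows and thus parallel to their cross product. *)
Lemma sorted_kernel_dichotomy (M : 'I_3 -> 'I_3 -> int) (a b c : int) :
  0 <= a -> a <= b -> b <= c -> 0 < c -> (forall i, \sum_j M i j * vec3 a b c j = 0) ->
  (forall i, \sum_j `|M i j| <= 5) -> (forall j, \sum_i `|M i j| <= 5) ->
  (forall i, \sum_j M i j != 0) -> (forall j, \sum_i M i j != 0) ->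
  c = a + b \/ small_parallel (vec3 a b c).
Proof.
move=> a_ge0 ab bc c_gt0 Mx0 row_norm col_norm row_neq0 col_neq0.
case: (boolP [forall i, forall k, forall j, cross (M i) (M k) j == 0]) => [rank1|].
  have minors0 i k : forall j l, M i j * M k l = M i l * M k j.
    by apply: cross_eq0 => j; apply/eqP; move/forallP/(_ i)/forallP/(_ k)/forallP: rank1.
  have norm1 := rank1_entry_norm1 minors0 row_norm col_norm row_neq0 col_neq0.
  left; move: (Mx0 0); rewrite sum_ord3 /vec3 /= => row0.
  exact: signed_sum3_sorted (norm1 _ _) (norm1 _ _) (norm1 _ _) row0 a_ge0 ab bc c_gt0.
move=> /forallPn[i /forallPn[k /forallPn[j cross_neq0]]].
right; exists (cross (M i) (M k)); split; first by exists j.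
  have entry_le i' j' : `|M i' j'| <= 5.
    by have := row_norm i'; rewrite sum_ord3; case: (ord3_cases j') => ->; lia.
  by move=> j'; apply: (le_trans (norm_cross_le (entry_le i) (entry_le k) j')).
by move=> j'; rewrite cross_cross !Mx0 !mulr0 subrr.
Qed.

Lemma small_parallel_gcd (a b c : nat) : small_parallel (vec3 a%:Z b%:Z c%:Z) ->
  (10 ^ 6 <= a ^ 2 + b ^ 2 + c ^ 2)%N -> (1 < gcdn a (gcdn b c))%N.
Proof.
move=> [d [[j dj] d_le par]] big; set x := vec3 a b c in par.
have g_gt0 : (0 < gcdn a (gcdn b c))%N.
  rewrite !gcdn_gt0; apply: contraLR big; rewrite !negb_or -!leqNgt !leqn0.
  by case/and3P => /eqP-> /eqP-> /eqP->.
rewrite ltnNge; apply/negP => g_le1.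
have [w wx1] : exists w : 'I_3 -> int, \sum_k w k * x k = 1.
  have [u [v]] := Bezoutz a%:Z (gcdn b c)%:Z; rewrite /gcdz /= => uvE.
  have [u' [v']] := Bezoutz b%:Z c%:Z; rewrite /gcdz /= => uvE'.
  exists (vec3 u (v * u') (v * v')); rewrite sum_ord3 /x /vec3 /=.
  have g1 : gcdn a (gcdn b c) = 1%N by apply/eqP; rewrite eqn_leq g_le1.
  by rewrite -[1]/(1%N%:Z) -g1 -uvE -uvE'; ring.
pose lam := \sum_k w k * d k.
have dE l : d l = lam * x l.
  rewrite -[d l]mul1r -wx1 !mulr_suml; apply: eq_bigr => k _.
  by rewrite -mulrA (cross_eq0 par); ring.
have lam_neq0 : lam != 0 by apply: contraNneq dj => lam0; rewrite dE lam0 mul0r.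
have x_le l : `|x l| <= 50.
  apply: le_trans (d_le l); rewrite dE normrM.
  have : 1 <= `|lam| by rewrite -normr_gt0 in lam_neq0; lia.
  by move: `|lam| (normr_ge0 (x l)) => L; nia.
have [a_le b_le c_le] : [/\ a <= 50, b <= 50 & c <= 50]%N.
  by move: (x_le 0) (x_le 1) (x_le 2); rewrite /x /vec3 /=; split; lia.
have : (a ^ 2 + b ^ 2 + c ^ 2 <= 50 ^ 2 + 50 ^ 2 + 50 ^ 2)%N by rewrite !leq_add ?leq_sqr.
by move: big; clear; lia.
Qed.

Local Close Scope ring_scope.

Lemma odd_prime_dvd3 (a b c : nat) : 1 < gcdn a (gcdn b c) ->
  (a ^ 2 + b ^ 2 + c ^ 2) %% 4 = 2 -> exists p, [/\ prime p, odd p, p %| a, p %| b & p %| c].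
Proof.
move=> g_gt1 sum_mod4; set g := gcdn a (gcdn b c) in g_gt1.
have /and3P[ga gb gc] : [&& g %| a, g %| b & g %| c] by rewrite -!dvdn_gcd.
have g_odd : odd g.
  case/boolP: (odd g) => // /negPf g_even; move: sum_mod4.
  have {}g_even : 2 %| g by rewrite dvdn2 g_even.
  have sq4 x : g %| x -> 2 ^ 2 %| x ^ 2 by move=> gx; rewrite dvdn_exp2r ?(dvdn_trans g_even gx).
  by move: (dvdn_add (dvdn_add (sq4 _ ga) (sq4 _ gb)) (sq4 _ gc)); rewrite /dvdn => /eqP->.
exists (pdiv g); split; rewrite ?pdiv_prime //; last by apply: dvdn_trans (pdiv_dvd g) _.
- apply: contraTT g_odd; rewrite -!dvdn2 => /dvdn_trans; apply; exact: pdiv_dvd.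
- exact: dvdn_trans (pdiv_dvd g) ga.
- exact: dvdn_trans (pdiv_dvd g) gb.
Qed.

Lemma C_eq5 (m r : nat) : C m r = 5 -> balanced m r 5 /\ ~ balanced m r 3.
Proof.
rewrite /C; case: excluded_middle_informative => // ex; case: ex_minnP => n + min_n nE.
rewrite nE /odd_balanced; case: excluded_middle_informative => // bal5 _; split => // bal3.
have : odd_balanced m r 3 by rewrite /odd_balanced; case: excluded_middle_informative.
by move/min_n; rewrite nE.
Qed.

Local Open Scope ring_scope.

Lemma balanced3_of_add (a b : nat) : balanced 3 (a ^ 2 + b ^ 2 + (a + b) ^ 2) 3.
Proof.
pose x := vec3 a%:Z (- (a + b)%N%:Z) b%:Z.
exists (fun i j => x (j + i)); split=> [i|j]; rewrite sum_ord3.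
  by case: (ord3_cases i) => ->; rewrite /x /vec3 /= ?sqrrN -?natz ?natrD ?natrX; ring.
by case: (ord3_cases j) => ->; rewrite /x /vec3 /= -?natz ?natrD; ring.
Qed.

Lemma signed_perm_of_abs_profile n (w : 'I_n -> int) :
  exists (s : 'S_n) (eps : 'I_n -> int), (forall j, eps j = 1 \/ eps j = -1) /\
    forall j, w j = eps j * (nth 0 (abs_profile w) (s j))%:Z.
Proof.
have [s sE] := abs_profile_perm w.
exists s, (fun j => if w j < 0 then -1 else 1); split => j; first by case: ifP; [right|left].
rewrite -sE abszE; case: (ltrP (w j) 0) => w0.
  by rewrite ltr0_norm // mulN1r opprK.
by rewrite ger0_norm // mul1r.
Qed.

(* Each v_i is a signed permutation of x = (a, b, c); summing the five signed permutation
   matrices gives an M with M x = 0, absolute row and column sums at most 5, and odd (hence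
   nonzero) row and column sums. *)
Lemma common_profile_kernel (v : 'I_5 -> 'I_3 -> int) (a b c : nat) :
  (forall i, abs_profile (v i) = [:: a; b; c]) -> (forall j, \sum_i v i j = 0) ->
  (a <= b <= c)%N -> (0 < c)%N -> c = (a + b)%N \/ small_parallel (vec3 a b c).
Proof.
move=> prof v_sum /andP[ab bc] c_gt0.
have /fin_all_exists[se seE] : forall i, exists se : 'S_3 * ('I_3 -> int),
    (forall j, se.2 j = 1 \/ se.2 j = -1) /\ forall j, v i j = se.2 j * vec3 a b c (se.1 j).
  move=> i; have [s [eps [eps_sign vE]]] := signed_perm_of_abs_profile (v i).
  exists (s, eps); split => // j; rewrite vE prof /=; congr (_ * _).
  by case: (ord3_cases (s j)) => ->.
pose s i := (se i).1; pose eps i := (se i).2; pose M := signed_perm_sum s eps.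
have eps_sign i j : eps i j = 1 \/ eps i j = -1 := (seE i).1 j.
have Mx0 j : \sum_k M j k * vec3 a b c k = 0.
  by rewrite signed_perm_sum_mulr -[RHS](v_sum j); apply: eq_bigr => i _; rewrite (seE i).2.
have row_neq0 j : \sum_k M j k != 0 by rewrite signed_perm_sum_row sum_signs_neq0.
have col_neq0 k : \sum_j M j k != 0 by rewrite signed_perm_sum_col sum_signs_neq0.
have [a_ge0 abZ bcZ c_gtZ0] : [/\ 0 <= a%:Z, a%:Z <= b%:Z, b%:Z <= c%:Z & 0 < c%:Z].
  by rewrite !lez_nat ltz_nat ab bc c_gt0.
have row_norm := signed_perm_sum_row_norm s eps_sign.
have col_norm := signed_perm_sum_col_norm s eps_sign.
have [[cE]|par] :=
  sorted_kernel_dichotomy a_ge0 abZ bcZ c_gtZ0 Mx0 row_norm col_norm row_neq0 col_neq0.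
  by left.
by right.
Qed.

Local Close Scope ring_scope.

Theorem corollary1 (t : nat) :
  inT t -> 10 ^ 6 <= t -> C 3 t = 5 -> 2 <= P t.
Proof.
move=> [_ [t_mod4 _]] t_big /C_eq5[[v [v_norm v_sum]] not_bal3].
case: (boolP [forall i, abs_profile (v i) == abs_profile (v ord0)]) => [/forallP same|].
  2: by case/forallPn=> i /(two_le_P (v_norm i) (v_norm ord0)).
have [a [b [c [v0E abc tE]]]] := abs_profile_ord3 (v ord0).
move: tE; rewrite v_norm => -[tE].
have c_gt0 : 0 < c.
  rewrite lt0n; apply/eqP => c0; move: abc t_mod4; rewrite tE c0 leqn0 => /andP[ab /eqP b0].
  by move: ab; rewrite b0 leqn0 => /eqP->.
have [cE|par] := common_profile_kernel (fun i => etrans (eqP (same i)) v0E) v_sum abc c_gt0.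
  by case: not_bal3; rewrite tE cE; apply: balanced3_of_add.
rewrite tE in t_big t_mod4.
have [p [pp po pa pb pc]] := odd_prime_dvd3 (small_parallel_gcd par t_big) t_mod4.
exact: two_le_P_of_prime_dvd pp po c_gt0 abc (esym tE) pa pb pc.
Qed.
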